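(* Let $n_1,\ldots,n_N$ be positive integers and let $\mathbf{R}=(R_1,\ldots,R_N)\in\mathcal{A}^{(n_1,\ldots,n_N)}$. Then the Taylor joint spectrum $\sigma_T(\mathbf{R})$ of the commuting family of operators $(R_k)_{ij}$, $k=1,\ldots,N$, $i,j=1,\ldots,n_k$ (regarded as a subset of $\mathbb{C}^{n_1\times n_1}\times\cdots\times\mathbb{C}^{n_N\times n_N}$) satisfies $$\sigma_T(\mathbf{R})\subset\Pi^{n_1\times n_1}\times\cdots\times\Pi^{n_N\times n_N}.$$
   Context: For a positive integer $n$, $\Pi^{n\times n}:=\{M\in\mathbb{C}^{n\times n}: M+M^*>0\}$. $\mathcal{A}^{(n_1,\ldots,n_N)}$ denotes the class of $N$-tuples $\mathbf{R}=(R_1,\ldots,R_N)$ where, for some Hilbert space $\mathcal{H}_\mathbf{R}$ and some commutative algebra $\mathcal{B}_\mathbf{R}\subset L(\mathcal{H}_\mathbf{R})$, each $R_k$ is an $n_k\times n_k$ matrix with entries $(R_k)_{ij}\in\mathcal{B}_\mathbf{R}$ (regarded as an operator on $\mathbb{C}^{n_k}\otimes\mathcal{H}_\mathbf{R}$), and there is a real constant $s_\mathbf{R}>0$ with $R_k+R_k^*\geq s_\mathbf{R}I_{\mathbb{C}^{n_k}\otimes\mathcal{H}_\mathbf{R}}$ for $k=1,\ldots,N$. *)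

From mathcomp Require Import all_boot all_order all_algebra.
From mathcomp Require Import complex reals.
Set Implicit Arguments. Unset Strict Implicit. Unset Printing Implicit Defensive.
Import Order.TTheory GRing.Theory Num.Theory.
Local Open Scope ring_scope.

Section HilbertDefs.
Variable R : realType.
Variable H : lmodType R[i].
Variable ip : H -> H -> R[i].

(* inner-product axioms (the order on R[i] is the usual partial order on C:
   0 <= z iff z is real and nonnegative) *)
Definition inner_product_axioms : Prop :=
  [/\ (forall (a : R[i]) (x y z : H), ip (a *: x + y) z = a * ip x z + ip y z),
      (forall x y : H, ip y x = (ip x y)^*),
      (forall x : H, 0 <= ip x x) &
      (forall x : H, ip x x = 0 -> x = 0)].

(* completeness for the norm ||x|| = sqrt <x,x> (stated with squared norms) *)
Definition ip_complete : Prop :=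
  forall u : nat -> H,
    (forall e : R, 0 < e -> exists N : nat, forall m k : nat, (N <= m)%N -> (N <= k)%N ->
        ip (u m - u k) (u m - u k) < (e%:C)%C) ->
    exists l : H, forall e : R, 0 < e -> exists N : nat, forall k : nat, (N <= k)%N ->
        ip (u k - l) (u k - l) < (e%:C)%C.

Definition is_hilbert : Prop := inner_product_axioms /\ ip_complete.

Definition bounded_op (T : H -> H) : Prop :=
  (forall (a : R[i]) (x y : H), T (a *: x + y) = a *: T x + T y) /\
  exists c : R, forall x : H, ip (T x) (T x) <= (c%:C)%C * ip x x.

Definition commutative_subalgebra (B : (H -> H) -> Prop) : Prop :=
  [/\ (forall T, B T -> bounded_op T),
      (forall S T, B S -> B T -> B (fun x => S x + T x)),
      (forall (a : R[i]) T, B T -> B (fun x => a *: T x)),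
      (forall S T, B S -> B T -> B (S \o T)) &
      (forall S T, B S -> B T -> S \o T = T \o S)].

(* C^n (x) H as n-tuples of vectors, its inner product, and the action of an
   n x n operator matrix *)
Definition ipn (n : nat) (x y : 'I_n -> H) : R[i] := \sum_(i < n) ip (x i) (y i).
Definition opmx_apply (n : nat) (M : 'I_n -> 'I_n -> H -> H) (x : 'I_n -> H) :
  'I_n -> H := fun i => \sum_(j < n) M i j (x j).

(* Koszul complex of (T_j - lam_j)_{j in I}: the space is the direct sum over
   subsets S of I (S <-> e_S in the exterior algebra of C^I, tensor H), and
   d(e_S (x) h) = sum_{j notin S} e_j /\ e_S (x) (T_j - lam_j) h,
   using the order of I given by enum_rank. *)
Definition koszul_d (I : finType) (T : I -> H -> H) (lam : I -> R[i])
  (x : {set I} -> H) : {set I} -> H :=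
  fun S => \sum_(j in S)
    ((-1) ^+ #|[set i in S | (enum_rank i < enum_rank j)%N]|) *:
       (T j (x (S :\ j)) - lam j *: x (S :\ j)).

Definition taylor_spectrum (I : finType) (T : I -> H -> H) (lam : I -> R[i]) : Prop :=
  ~ (forall x : {set I} -> H, (forall S, koszul_d T lam x S = 0) ->
        exists y : {set I} -> H, forall S, koszul_d T lam y S = x S).

End HilbertDefs.

Definition conjtr (R : realType) (m n : nat) (A : 'M[R[i]]_(m, n)) : 'M[R[i]]_(n, m) :=
  (map_mx Num.conj A)^T.

Definition in_Pi (R : realType) (n : nat) (M : 'M[R[i]]_n) : Prop :=
  forall v : 'cV[R[i]]_n, v != 0 ->
    0 < (conjtr v *m (M + conjtr M) *m v) ord0 ord0.

(* index set of the family (R_k)_{ij}, k < N, i, j < n_k *)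
Definition entry_index (N : nat) (n : 'I_N -> nat) : finType :=
  {k : 'I_N & ('I_(n k) * 'I_(n k))%type}.

(* Suppose [lam] lies in the Taylor spectrum but some block [Lam_k = (lam_(k,ij))_ij] is not
   in [Pi], and pick [v <> 0] with [Re (v^* Lam_k v) <= 0].  Since [R_k] is accretive, the
   compression [A = sum_ij conj(v_i) v_j ((R_k)_ij - lam_(k,ij))] is coercive:
   [Re <A y, y> >= (s |v|^2 / 2) |y|^2].  A bounded coercive operator on a Hilbert space is
   invertible (Lax-Milgram: [y |-> y + t (b - A y)] is a contraction for small [t > 0]), and
   [A^-1] commutes with the whole family.  The operators [U_(k,ij) = conj(v_i) v_j A^-1] then
   commute with the family and satisfy [sum U_(k,ij) ((R_k)_ij - lam_(k,ij)) = 1], which gives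
   a contracting homotopy of the Koszul complex: it is exact, a contradiction. *)

From HB Require Import structures.
From mathcomp Require Import all_boot all_order all_algebra.
From mathcomp Require Import complex reals topology normedtype sequences.
From mathcomp Require Import ring lra.
Import numFieldNormedType.Exports.
Import Order.TTheory GRing.Theory Num.Theory.
Local Open Scope ring_scope.
Set Implicit Arguments. Unset Strict Implicit. Unset Printing Implicit Defensive.

Section ComplexRe.
Variable R : realType.
Implicit Types (t : R) (x : R[i]).

Lemma Re_realMl t x : complex.Re ((t%:C)%C * x) = t * complex.Re x.
Proof. by case: x => a b /=; rewrite mul0r subr0. Qed.

Lemma Re_realMr t x : complex.Re (x * (t%:C)%C) = complex.Re x * t.
Proof. by rewrite mulrC Re_realMl mulrC. Qed.

Lemma Re_conj x : complex.Re x^* = complex.Re x.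
Proof. by case: x. Qed.

Lemma addr_conj x : x + x^* = ((complex.Re x *+ 2)%:C)%C.
Proof. by case: x => a b; simpc; rewrite mulr2n. Qed.

Lemma ge0_Re_real x : 0 <= x -> x = ((complex.Re x)%:C)%C.
Proof. by move=> x_ge0; have := ger0_Im x_ge0; case: x {x_ge0} => a b /= ->. Qed.

End ComplexRe.

Lemma geometric_lt_eventually (R : realType) (q B e : R) : 0 <= q -> q < 1 -> 0 < e ->
  exists K, forall k, (K <= k)%N -> q ^+ k * B < e.
Proof.
move=> q_ge0 q_lt1 e_gt0.
have [|K _ hK] := (cvgrPdist_lt _ _).1 (cvg_geometric B (z := q) _) e e_gt0.
  by rewrite ger0_norm.
exists K => k /hK /=; rewrite sub0r normrN /geometric /= mulrC.
exact: le_lt_trans (ler_norm _).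
Qed.

Section QuadraticForm.
Variable R : realType.

Lemma conjtrM m n p (A : 'M[R[i]]_(m, n)) (B : 'M[R[i]]_(n, p)) :
  conjtr (A *m B) = conjtr B *m conjtr A.
Proof. by rewrite /conjtr map_mxM trmx_mul. Qed.

Lemma conjtrK m n (A : 'M[R[i]]_(m, n)) : conjtr (conjtr A) = A.
Proof. by apply/matrixP => i j; rewrite !mxE conjCK. Qed.

Definition compression_weight n (v : 'cV[R[i]]_n) (ij : 'I_n * 'I_n) : R[i] :=
  (v ij.1 ord0)^* * v ij.2 ord0.

Lemma quadformE n (L : 'M[R[i]]_n) (v : 'cV[R[i]]_n) :
  (conjtr v *m L *m v) ord0 ord0 = \sum_ij compression_weight v ij * L ij.1 ij.2.
Proof.
rewrite mxE /compression_weight.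
rewrite -(pair_bigA _ (fun i j => (v i ord0)^* * v j ord0 * L i j)) exchange_big.
apply: eq_bigr => j _.
rewrite mxE mulr_suml; apply: eq_bigr => i _.
by rewrite /conjtr !mxE mulrAC.
Qed.

Lemma quadform_hermitian_part n (L : 'M[R[i]]_n) (v : 'cV[R[i]]_n) :
  (conjtr v *m (L + conjtr L) *m v) ord0 ord0 =
  ((complex.Re ((conjtr v *m L *m v) ord0 ord0) *+ 2)%:C)%C.
Proof.
rewrite mulmxDr mulmxDl.
have -> : conjtr v *m conjtr L *m v = conjtr (conjtr v *m L *m v).
  by rewrite !conjtrM conjtrK mulmxA.
by rewrite mxE [X in _ + X]mxE [X in _ + X]mxE addr_conj.
Qed.

Lemma quadform_self_gt0 n (v : 'cV[R[i]]_n) :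
  v != 0 -> 0 < complex.Re ((conjtr v *m v) ord0 ord0).
Proof.
move=> v_neq0; have [i vi_neq0] : exists i, v i ord0 != 0.
  apply/existsP; apply: contraNT v_neq0 => /existsPn v0.
  by apply/eqP; apply/matrixP => i j; rewrite (ord1 j) mxE; apply/eqP/negbNE/v0.
have Re_ge0 j : 0 <= complex.Re ((conjtr v) ord0 j * v j ord0).
  by have := mul_conjC_ge0 (v j ord0); rewrite /conjtr !mxE mulrC lecE => /andP[].
have Re_gt0 : 0 < complex.Re ((conjtr v) ord0 i * v i ord0).
  by have := mul_conjC_gt0 (v i ord0); rewrite vi_neq0 /conjtr !mxE mulrC ltcE => /andP[].
rewrite mxE raddf_sum (bigD1 i) //= ltr_pwDl //.
by apply: sumr_ge0 => j _.
Qed.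

End QuadraticForm.

Section KoszulHomotopy.
Variables (R : realType) (H : lmodType R[i]) (I : finType).
Implicit Types (S : {set I}) (j l : I).

Definition koszul_sign S j : R[i] :=
  (-1) ^+ #|[set i in S | (enum_rank i < enum_rank j)%N]|.

Lemma koszul_signD1 S j l : j \in S ->
  koszul_sign S l = (-1) ^+ (enum_rank j < enum_rank l)%N * koszul_sign (S :\ j) l.
Proof.
move=> jS; rewrite /koszul_sign -exprD (cardsD1 j) inE jS /=.
by congr (_ ^+ (_ + _)); apply: eq_card => i; rewrite !inE andbA.
Qed.

Lemma koszul_sign_sqr S j : koszul_sign S j * koszul_sign S j = 1.
Proof. by rewrite -exprD addnn -mul2n exprM sqrrN !expr1n. Qed.

Lemma koszul_signD1_self S j : j \in S -> koszul_sign (S :\ j) j = koszul_sign S j.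
Proof. by move=> jS; rewrite (koszul_signD1 j jS) ltnn mul1r. Qed.

Lemma koszul_sign_swap S j l : j \in S -> l \notin S ->
  koszul_sign S l * koszul_sign (l |: S) j = - (koszul_sign S j * koszul_sign (S :\ j) l).
Proof.
move=> jS lS; have neq_jl : j != l by apply: contraNneq lS => <-.
rewrite (koszul_signD1 l jS) (koszul_signD1 j (setU11 l S)) setU1K // mulrACA -exprD.
have -> : ((enum_rank j < enum_rank l) + (enum_rank l < enum_rank j))%N = 1%N.
  by case: ltngtP => // /val_inj/enum_rank_inj eq_jl; rewrite eq_jl eqxx in neq_jl.
by rewrite expr1 mulN1r mulrC.
Qed.

Variables (T U : I -> {linear H -> H}) (lam : I -> R[i]).
Hypothesis TU : forall j l y, T j (U l y) = U l (T j y).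
Hypothesis sum_UD : forall y, \sum_j U j (T j y - lam j *: y) = y.
Local Notation D j := (T j \- lam j \*: idfun).

Let DU j l y : D j (U l y) = U l (D j y).
Proof. by rewrite /= TU [in RHS]linearB [in RHS]linearZ. Qed.
Local Notation d := (koszul_d (fun j => T j) lam).

Lemma koszul_dE x S : d x S = \sum_(j in S) koszul_sign S j *: D j (x (S :\ j)).
Proof. by []. Qed.

Definition koszul_h (x : {set I} -> H) S : H :=
  \sum_(l | l \notin S) koszul_sign S l *: U l (x (l |: S)).

Lemma koszul_d_h x S : d (koszul_h x) S =
  \sum_(j in S) D j (U j (x S)) +
  \sum_(j in S) \sum_(l | l \notin S)
     (koszul_sign S j * koszul_sign (S :\ j) l) *: D j (U l (x (l |: (S :\ j)))).
Proof.
rewrite koszul_dE -big_split; apply: eq_bigr => j jS.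
rewrite /koszul_h linear_sum scaler_sumr (bigD1 j); last by rewrite !inE eqxx.
congr (_ + _).
  by rewrite linearZ scalerA setD1K // koszul_signD1_self // koszul_sign_sqr scale1r.
apply: eq_big => [l|l _]; last by rewrite linearZ scalerA.
by rewrite !inE negb_and negbK; case: (l =P j) => [->|] /=; rewrite ?jS ?andbT.
Qed.

Lemma koszul_h_d x S : koszul_h (d x) S =
  \sum_(l | l \notin S) U l (D l (x S)) +
  \sum_(l | l \notin S) \sum_(j in S)
     (koszul_sign S l * koszul_sign (l |: S) j) *: U l (D j (x ((l |: S) :\ j))).
Proof.
rewrite /koszul_h -big_split; apply: eq_bigr => l lS.
rewrite koszul_dE linear_sum scaler_sumr (bigD1 l); last by rewrite setU11.
congr (_ + _).
  rewrite linearZ scalerA setU1K //.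
  by rewrite -{1}(setU1K lS) koszul_signD1_self ?setU11 // koszul_sign_sqr scale1r.
apply: eq_big => [j|j _]; last by rewrite linearZ scalerA.
by rewrite !inE; case: (j =P l) => [->|] /=; rewrite ?(negbTE lS) ?andbT.
Qed.

Lemma koszul_homotopy x S : d (koszul_h x) S + koszul_h (d x) S = x S.
Proof.
rewrite koszul_d_h koszul_h_d addrACA.
have -> : \sum_(j in S) D j (U j (x S)) + \sum_(l | l \notin S) U l (D l (x S)) = x S.
  rewrite -[RHS]sum_UD [RHS](bigID (mem S)).
  by congr (_ + _); apply: eq_big => // j _; rewrite DU.
rewrite -[RHS]addr0; congr (_ + _).
rewrite [X in _ + X]exchange_big -big_split big1 // => j jS.
rewrite -big_split big1 // => l lS.
have -> : (l |: S) :\ j = l |: (S :\ j).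
  have neq_lj : l != j by apply: contraNneq lS => ->.
  by apply/setP => i; rewrite !inE; case: (i =P l) => [->|_]; rewrite ?neq_lj.
by rewrite koszul_sign_swap // DU scaleNr; exact: subrr.
Qed.

Lemma koszul_exact : ~ taylor_spectrum (fun j => T j) lam.
Proof.
apply=> x dx0; exists (koszul_h x) => S.
rewrite -[RHS](koszul_homotopy x S) [koszul_h (d x) S]big1 ?addr0 // => l _.
by rewrite dx0 linear0 scaler0.
Qed.

End KoszulHomotopy.

Section InnerProductSpace.
Variables (R : realType) (H : lmodType R[i]) (ip : H -> H -> R[i]).
Hypothesis ipP : inner_product_axioms ip.

Lemma ip_linearl z : linear_for *%R (ip^~ z).
Proof. by move=> a x y; case: ipP. Qed.

Definition ip_lin z : {linear H -> R[i] | *%R} :=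
  HB.pack (ip^~ z) (GRing.isLinear.Build _ _ _ _ (ip^~ z) (ip_linearl z)).

Lemma ip0l z : ip 0 z = 0. Proof. exact: (linear0 (ip_lin z)). Qed.
Lemma ipDl x y z : ip (x + y) z = ip x z + ip y z. Proof. exact: (linearD (ip_lin z) x y). Qed.
Lemma ipNl x z : ip (- x) z = - ip x z. Proof. exact: (linearN (ip_lin z) x). Qed.
Lemma ipBl x y z : ip (x - y) z = ip x z - ip y z. Proof. exact: (linearB (ip_lin z) x y). Qed.
Lemma ipZl a x z : ip (a *: x) z = a * ip x z. Proof. exact: (linearZ_LR (ip_lin z) a x). Qed.
Lemma ip_suml (J : Type) (r : seq J) (P : pred J) (F : J -> H) z :
  ip (\sum_(j <- r | P j) F j) z = \sum_(j <- r | P j) ip (F j) z.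
Proof. exact: (linear_sum (ip_lin z) r P F). Qed.

Lemma ip_conj x y : ip y x = (ip x y)^*.
Proof. by case: ipP. Qed.

Lemma ipDr x y z : ip z (x + y) = ip z x + ip z y.
Proof. by rewrite ip_conj ipDl rmorphD /= -!ip_conj. Qed.
Lemma ipNr x z : ip z (- x) = - ip z x.
Proof. by rewrite ip_conj ipNl rmorphN /= -ip_conj. Qed.
Lemma ipZr a x z : ip z (a *: x) = a^* * ip z x.
Proof. by rewrite ip_conj ipZl rmorphM /= -ip_conj. Qed.

Lemma ipn_conj n (x y : 'I_n -> H) : ipn ip x y = (ipn ip y x)^*.
Proof. by rewrite /ipn rmorph_sum; apply: eq_bigr => i _; rewrite ip_conj. Qed.

Definition sqnorm x := complex.Re (ip x x).
Definition reip x y := complex.Re (ip x y).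

Lemma ip_sqnorm x : ip x x = ((sqnorm x)%:C)%C.
Proof. by apply: ge0_Re_real; case: ipP. Qed.

Lemma sqnorm_ge0 x : 0 <= sqnorm x.
Proof. by case: ipP => _ _ ge0 _; have := ge0 x; rewrite ip_sqnorm ler0c. Qed.

Lemma sqnorm_eq0 x : sqnorm x = 0 -> x = 0.
Proof. by move=> x0; case: ipP => _ _ _; apply; rewrite ip_sqnorm x0. Qed.

Lemma sqnorm0 : sqnorm 0 = 0.
Proof. by rewrite /sqnorm ip0l. Qed.

Lemma sqnormN x : sqnorm (- x) = sqnorm x.
Proof. by rewrite /sqnorm ipNl ipNr opprK. Qed.

Lemma sqnormB x y : sqnorm (x - y) = sqnorm (y - x).
Proof. by rewrite -sqnormN opprB. Qed.

Lemma sqnormZ a x : sqnorm (a *: x) = complex.Re (a * a^*) * sqnorm x.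
Proof. by rewrite /sqnorm ipZl ipZr mulrA ip_sqnorm Re_realMr. Qed.

Lemma sqnormZ_real (t : R) x : sqnorm ((t%:C)%C *: x) = t ^+ 2 * sqnorm x.
Proof. by rewrite sqnormZ; congr (_ * _); simpc; rewrite /= expr2. Qed.

Lemma reipC x y : reip x y = reip y x.
Proof. by rewrite /reip ip_conj Re_conj. Qed.

Lemma reipZl (t : R) x y : reip ((t%:C)%C *: x) y = t * reip x y.
Proof. by rewrite /reip ipZl Re_realMl. Qed.

Lemma reipNr x y : reip x (- y) = - reip x y.
Proof. by rewrite /reip ipNr raddfN. Qed.

Lemma sqnormD x y : sqnorm (x + y) = sqnorm x + sqnorm y + reip x y *+ 2.
Proof.
rewrite /sqnorm ipDl !ipDr !raddfD /= -/(reip x y) -/(reip y x) [reip y x]reipC.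
by rewrite mulr2n; ring.
Qed.

Lemma sqnormD_le_eps e x y : 0 < e ->
  sqnorm (x + y) <= (1 + e) * sqnorm x + (1 + e^-1) * sqnorm y.
Proof.
move=> e_gt0; set z := (e%:C)%C *: x - y.
have z_ge0 : 0 <= e^-1 * sqnorm z by rewrite mulr_ge0 ?sqnorm_ge0 // invr_ge0 ltW.
have zE : e^-1 * sqnorm z = e * sqnorm x + e^-1 * sqnorm y - reip x y *+ 2.
  rewrite sqnormD sqnormN reipNr reipZl sqnormZ_real !mulr2n.
  by field; rewrite gt_eqF.
rewrite sqnormD !mulr2n; lra.
Qed.

Lemma sqnormD_le x y : sqnorm (x + y) <= sqnorm x *+ 2 + sqnorm y *+ 2.
Proof. by have := sqnormD_le_eps x y ltr01; rewrite invr1 !mulr2n; lra. Qed.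

Definition bounded (f : H -> H) := exists M : R, forall x, sqnorm (f x) <= M * sqnorm x.

Lemma bounded_id : bounded id.
Proof. by exists 1 => x; rewrite mul1r. Qed.

Lemma bounded_add f g : bounded f -> bounded g -> bounded (fun x => f x + g x).
Proof.
move=> [Mf f_le] [Mg g_le]; exists (Mf *+ 2 + Mg *+ 2) => x.
apply: le_trans (sqnormD_le _ _) _.
by have := f_le x; have := g_le x; rewrite !mulr2n !mulrDl; lra.
Qed.

Lemma bounded_scale a f : bounded f -> bounded (fun x => a *: f x).
Proof.
move=> [M f_le]; exists (complex.Re (a * a^*) * M) => x.
rewrite sqnormZ -mulrA ler_wpM2l //.
by have := mul_conjC_ge0 a; rewrite lecE => /andP[].
Qed.

Lemma bounded_sum (J : Type) (r : seq J) (F : J -> H -> H) :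
  (forall j, bounded (F j)) -> bounded (fun x => \sum_(j <- r) F j x).
Proof.
move=> FB; elim: r => [|j r IH]; first by exists 0 => x; rewrite big_nil sqnorm0 mul0r.
have [M FM] := bounded_add (FB j) IH.
by exists M => x; rewrite big_cons; apply: FM.
Qed.

Lemma bounded_opP f : bounded_op ip f -> bounded f.
Proof.
by case=> _ [M fM]; exists M => x; have := fM x; rewrite !ip_sqnorm -rmorphM lecR.
Qed.

Section ContractionFixpoint.
Hypothesis ip_cplt : ip_complete ip.
Variables (Phi : H -> H) (q : R).
Hypotheses (q_gt0 : 0 < q) (q_lt1 : q < 1).
Hypothesis Phi_contraction : forall x y, sqnorm (Phi x - Phi y) <= q * sqnorm (x - y).

Lemma iter_contraction k x y :
  sqnorm (iter k Phi x - iter k Phi y) <= q ^+ k * sqnorm (x - y).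
Proof.
elim: k => [|k IH]; first by rewrite mul1r.
rewrite !iterS exprS -mulrA; apply: le_trans (Phi_contraction _ _) _.
by rewrite ler_wpM2l // ltW.
Qed.

Lemma orbit_bounded : exists B, forall k, sqnorm (iter k Phi 0) <= B.
Proof.
pose e := (1 - q) / (q *+ 2).
have e_gt0 : 0 < e by rewrite divr_gt0 ?subr_gt0 ?pmulrn_rgt0.
pose K := (1 + e^-1) * sqnorm (Phi 0).
have K_ge0 : 0 <= K by rewrite mulr_ge0 ?sqnorm_ge0 // addr_ge0 // invr_ge0 ltW.
pose B := K *+ 2 / (1 - q).
(* [(1 + e) q = (1 + q) / 2], so [B] is stable under the step [B' |-> (1 + e) q B' + K] *)
have BE : B = (1 + e) * (q * B) + K.
  by rewrite /B /K /e !mulr2n; field; rewrite gt_eqF ?addr_gt0 // gt_eqF // subr_gt0.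
exists B; elim=> [|k IH].
  by rewrite sqnorm0 divr_ge0 ?mulrn_wge0 // subr_ge0 ltW.
rewrite iterS -(subrK (Phi 0) (Phi _)); apply: le_trans (sqnormD_le_eps _ _ e_gt0) _.
rewrite [X in _ <= X]BE lerD2r ler_pM2l ?addr_gt0 //.
apply: le_trans (Phi_contraction _ _) _.
by rewrite subr0 ler_wpM2l // ltW.
Qed.

Lemma orbit_converges : exists l, forall e, 0 < e ->
  exists K, forall k, (K <= k)%N -> sqnorm (iter k Phi 0 - l) < e.
Proof.
have [B orbitB] := orbit_bounded.
have orbit_dist k m : (k <= m)%N -> sqnorm (iter m Phi 0 - iter k Phi 0) <= q ^+ k * B.
  move=> le_km; rewrite -(subnKC le_km) iterD.
  apply: le_trans (iter_contraction _ _ _) _.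
  by rewrite subr0 ler_wpM2l // exprn_ge0 // ltW.
have [l l_lim] : exists l, forall e, 0 < e -> exists K, forall k, (K <= k)%N ->
    ip (iter k Phi 0 - l) (iter k Phi 0 - l) < (e%:C)%C.
  apply: ip_cplt => e e_gt0.
  have [K geoK] := geometric_lt_eventually B (ltW q_gt0) q_lt1 e_gt0.
  exists K => m k Km Kk; rewrite ip_sqnorm ltcR.
  case: (leqP k m) => [le_km | /ltnW le_mk].
    exact: le_lt_trans (orbit_dist _ _ le_km) (geoK _ Kk).
  by rewrite sqnormB; apply: le_lt_trans (orbit_dist _ _ le_mk) (geoK _ Km).
exists l => e /l_lim [K lK]; exists K => k /lK.
by rewrite ip_sqnorm ltcR.
Qed.

Lemma contraction_fixpoint : exists x, Phi x = x.
Proof.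
have [l l_lim] := orbit_converges; exists l.
apply/eqP; rewrite -subr_eq0; apply/eqP/sqnorm_eq0/le_anti.
rewrite sqnorm_ge0 andbT; apply/ler_addgt0Pr => e e_gt0; rewrite add0r.
have [K lK] := l_lim (e / 4%:R) (divr_gt0 e_gt0 (ltr0Sn _ _)).
set x := iter K Phi 0.
have lK0 := lK K (leqnn K); have lK1 := lK K.+1 (leqnSn K).
have -> : Phi l - l = (Phi l - Phi x) + (iter K.+1 Phi 0 - l) by rewrite iterS addrA subrK.
have Phi_lx := Phi_contraction l x; rewrite [sqnorm (l - x)]sqnormB in Phi_lx.
have q_lx : q * sqnorm (x - l) <= sqnorm (x - l) by rewrite ler_piMl ?sqnorm_ge0 // ltW.
have := sqnormD_le (Phi l - Phi x) (iter K.+1 Phi 0 - l); rewrite !mulr2n; lra.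
Qed.

End ContractionFixpoint.

Section CoerciveOperator.
Variables (A : {linear H -> H}) (c : R).
Hypothesis c_gt0 : 0 < c.
Hypothesis A_coercive : forall x, c * sqnorm x <= reip (A x) x.

Lemma coercive_inj : injective A.
Proof.
move=> x y eq_Axy; apply/eqP; rewrite -subr_eq0; apply/eqP/sqnorm_eq0/le_anti.
rewrite sqnorm_ge0 andbT -(pmulr_rle0 _ c_gt0).
by have := A_coercive (x - y); rewrite linearB eq_Axy subrr /reip ip0l.
Qed.

Lemma coercive_sub_scale_le (M t : R) x :
  (forall x, sqnorm (A x) <= M * sqnorm x) -> 0 <= t ->
  sqnorm (x - (t%:C)%C *: A x) <= (1 - t * c *+ 2 + t ^+ 2 * M) * sqnorm x.
Proof.
move=> A_le t_ge0.
rewrite sqnormD sqnormN sqnormZ_real reipNr reipC reipZl.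
have := ler_wpM2l (sqr_ge0 t) (A_le x); have := ler_wpM2l t_ge0 (A_coercive x).
rewrite !mulr2n; lra.
Qed.

Hypothesis ip_cplt : ip_complete ip.
Hypothesis A_bounded : bounded A.

Lemma coercive_surj y : exists x, A x = y.
Proof.
have [M0 A_le0] := A_bounded.
(* enlarging the bound keeps the contraction constant [q] below positive *)
pose M := `|M0| + c ^+ 2 + 1.
have cM : c ^+ 2 < M by have := normr_ge0 M0; rewrite /M; lra.
have M_gt0 : 0 < M by apply: le_lt_trans cM; exact: sqr_ge0.
have A_le x : sqnorm (A x) <= M * sqnorm x.
  apply: le_trans (A_le0 x) (ler_wpM2r (sqnorm_ge0 _) _).
  by have := ler_norm M0; have := sqr_ge0 c; rewrite /M; lra.
pose t := c / M; pose q := 1 - c ^+ 2 / M.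
have q_gt0 : 0 < q by rewrite subr_gt0 ltr_pdivrMr // mul1r.
have q_lt1 : q < 1 by rewrite gtrBl divr_gt0 // exprn_gt0.
pose Phi x := x + (t%:C)%C *: (y - A x).
have Phi_contraction x x' : sqnorm (Phi x - Phi x') <= q * sqnorm (x - x').
  have -> : Phi x - Phi x' = (x - x') - (t%:C)%C *: A (x - x').
    rewrite /Phi [A (_ - _)]linearB !scalerBr opprD addrACA; congr (_ + _).
    by rewrite [_ *: y - _]addrC addrKA opprK opprB addrC.
  have -> : q = 1 - t * c *+ 2 + t ^+ 2 * M by rewrite /q /t mulr2n; field; rewrite gt_eqF.
  by apply: coercive_sub_scale_le; rewrite // divr_ge0 // ltW.
have [x Phi_x] := contraction_fixpoint ip_cplt q_gt0 q_lt1 Phi_contraction.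
exists x; have : (t%:C)%C *: (y - A x) = 0 by apply: (addrI x); rewrite addr0.
move/eqP; rewrite scaler_eq0 fmorph_eq0 (gt_eqF (divr_gt0 c_gt0 M_gt0)) /=.
by rewrite subr_eq0 eq_sym => /eqP.
Qed.

End CoerciveOperator.

Section CoerciveCombination.
Hypothesis ip_cplt : ip_complete ip.
Variables (I : finType) (T : I -> {linear H -> H}) (lam : I -> R[i]).
Hypothesis T_bounded : forall p, bounded (T p).
Hypothesis T_comm : forall p p' x, T p (T p' x) = T p' (T p x).
Variables (J : finType) (f : J -> I) (c : J -> R[i]) (e : R).

Definition shift_combination y := \sum_j c j *: (T (f j) y - lam (f j) *: y).

Hypothesis e_gt0 : 0 < e.
Hypothesis shift_combination_coercive :
  forall y, e * sqnorm y <= reip (shift_combination y) y.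

Fact shift_combination_is_linear : linear shift_combination.
Proof.
move=> a x y; rewrite /shift_combination scaler_sumr -big_split.
apply: eq_bigr => j _ /=.
have -> : T (f j) (a *: x + y) - lam (f j) *: (a *: x + y) =
    a *: (T (f j) x - lam (f j) *: x) + (T (f j) y - lam (f j) *: y).
  exact: (linearP (T (f j) \- lam (f j) \*: idfun) a x y).
by rewrite scalerDr !scalerA mulrC.
Qed.

HB.instance Definition _ :=
  GRing.isLinear.Build _ _ _ _ shift_combination shift_combination_is_linear.

Lemma shift_combination_bounded : bounded shift_combination.
Proof.
apply: bounded_sum => j; apply: bounded_scale.
have [M hM] := bounded_add (T_bounded (f j)) (bounded_scale (- lam (f j)) bounded_id).
by exists M => y; rewrite -scaleNr; apply: hM.
Qed.

Lemma shift_combination_comm p y : T p (shift_combination y) = shift_combination (T p y).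
Proof.
rewrite linear_sum; apply: eq_bigr => j _.
by rewrite linearZ linearB linearZ T_comm.
Qed.

Let shift_combination_onto y : exists x, shift_combination x == y.
Proof.
have [x <-] := coercive_surj e_gt0 shift_combination_coercive ip_cplt
  shift_combination_bounded y.
by exists x.
Qed.

Definition shift_combination_inv y := xchoose (shift_combination_onto y).

Lemma shift_combination_invK : cancel shift_combination_inv shift_combination.
Proof. by move=> y; apply/eqP/(xchooseP (shift_combination_onto y)). Qed.

Lemma shift_combinationK : cancel shift_combination shift_combination_inv.
Proof.
move=> x; apply: (coercive_inj e_gt0 shift_combination_coercive).
exact: shift_combination_invK.
Qed.

HB.instance Definition _ := GRing.isLinear.Build _ _ _ _ shift_combination_inv
  (can2_linear shift_combinationK shift_combination_invK).

Lemma shift_combination_inv_comm p y :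
  shift_combination_inv (T p y) = T p (shift_combination_inv y).
Proof.
apply: (can_inj shift_combinationK).
by rewrite -shift_combination_comm !shift_combination_invK.
Qed.

Theorem coercive_shift_combination_notin_taylor_spectrum :
  ~ taylor_spectrum (fun p => T p) lam.
Proof.
pose a p := \sum_(j | f j == p) c j.
pose U p : {linear H -> H} := a p \*: shift_combination_inv.
have UE p z : U p z = a p *: shift_combination_inv z by [].
apply: (koszul_exact (U := U)) => [p l y | y].
  by rewrite !UE linearZ shift_combination_inv_comm.
under eq_bigr do rewrite UE.
rewrite -[RHS]shift_combinationK linear_sum (partition_big f predT) //.
apply: eq_bigr => p _; rewrite scaler_suml; apply: eq_bigr => j /eqP <-.
by rewrite -linearZZ.
Qed.

End CoerciveCombination.

Section Compression.
Variables (n : nat) (M : 'I_n -> 'I_n -> {linear H -> H}) (s : R).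
Hypothesis M_accretive : forall x : 'I_n -> H,
  (s%:C)%C * ipn ip x x <=
  ipn ip (opmx_apply (fun i j => M i j) x) x + ipn ip x (opmx_apply (fun i j => M i j) x).

Lemma compression_coercive (L : 'M[R[i]]_n) (v : 'cV[R[i]]_n) y :
  complex.Re ((conjtr v *m L *m v) ord0 ord0) <= 0 ->
  s * complex.Re ((conjtr v *m v) ord0 ord0) / 2%:R * sqnorm y <=
  reip (\sum_ij compression_weight v ij *: (M ij.1 ij.2 y - L ij.1 ij.2 *: y)) y.
Proof.
move=> vLv_le0; pose x j := v j ord0 *: y.
pose Z := \sum_ij compression_weight v ij * ip (M ij.1 ij.2 y) y.
have MxxE : ipn ip (opmx_apply (fun i j => M i j) x) x = Z.
  rewrite /ipn /opmx_apply /Z /compression_weight.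
  rewrite -(pair_bigA _ (fun i j => (v i ord0)^* * v j ord0 * ip (M i j y) y)).
  apply: eq_bigr => i _; rewrite ip_suml; apply: eq_bigr => j _.
  by rewrite linearZ ipZl ipZr /=; ring.
have xxE : ipn ip x x = (conjtr v *m v) ord0 ord0 * ip y y.
  rewrite /ipn mxE mulr_suml; apply: eq_bigr => i _.
  by rewrite ipZl ipZr /conjtr !mxE; ring.
have := M_accretive x; rewrite [X in _ + X]ipn_conj MxxE xxE addr_conj ip_sqnorm.
rewrite lecE => /andP[_]; rewrite Re_realMl Re_realMr /= => Z_ge.
have ipE : ip (\sum_ij compression_weight v ij *: (M ij.1 ij.2 y - L ij.1 ij.2 *: y)) y =
    Z - (conjtr v *m L *m v) ord0 ord0 * ip y y.
  rewrite quadformE mulr_suml /Z -sumrB ip_suml; apply: eq_bigr => ij _.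
  by rewrite ipZl ipBl ipZl; ring.
rewrite /reip ipE raddfB /= ip_sqnorm Re_realMr.
have := mulr_le0_ge0 vLv_le0 (sqnorm_ge0 y); rewrite mulr2n in Z_ge; lra.
Qed.

End Compression.

End InnerProductSpace.

Definition linear_of_bounded (R : realType) (H : lmodType R[i]) (ip : H -> H -> R[i])
  (f : H -> H) (fB : bounded_op ip f) : {linear H -> H} :=
  HB.pack f (GRing.isLinear.Build _ _ _ _ f (proj1 fB)).

Unset Implicit Arguments.

Theorem theorem3p2 (R : realType) (H : lmodType R[i]) (ip : H -> H -> R[i])
  (N : nat) (n : 'I_N -> nat)
  (Rop : forall k : 'I_N, 'I_(n k) -> 'I_(n k) -> H -> H)
  (B : (H -> H) -> Prop) (s : R) :
  (forall k, (0 < n k)%N) ->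
  is_hilbert ip ->
  commutative_subalgebra ip B ->
  (forall k i j, B (Rop k i j)) ->
  0 < s ->
  (forall k (x : 'I_(n k) -> H),
      (s%:C)%C * ipn ip x x <= ipn ip (opmx_apply (Rop k) x) x + ipn ip x (opmx_apply (Rop k) x)) ->
  forall lam : entry_index n -> R[i],
    taylor_spectrum (fun p : entry_index n => Rop (tag p) (tagged p).1 (tagged p).2) lam ->
    forall k : 'I_N, in_Pi (\matrix_(i < n k, j < n k) lam (@Tagged _ k (fun k0 => ('I_(n k0) * 'I_(n k0))%type) (i, j))).
Proof.
move=> _ [ipP ip_cplt] [B_bounded _ _ _ B_comm] RB s_gt0 R_accretive lam lam_spec k v v_neq0.
have Rp_B (p : entry_index n) : B (Rop (tag p) (tagged p).1 (tagged p).2) := RB _ _ _.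
pose T (p : entry_index n) := linear_of_bounded (B_bounded _ (Rp_B p)).
(* [(ij.1, ij.2)] rather than [ij], so that [lam (tg ij)] is the matrix entry by conversion *)
pose tg (ij : 'I_(n k) * 'I_(n k)) : entry_index n := @Tagged _ k _ (ij.1, ij.2).
rewrite quadform_hermitian_part ltcR pmulrn_lgt0 // ltNge; apply/negP => vLv_le0.
have W_gt0 := quadform_self_gt0 v_neq0.
apply: (coercive_shift_combination_notin_taylor_spectrum ipP ip_cplt (T := T) (f := tg)
          (c := compression_weight v) (e := s * complex.Re ((conjtr v *m v) ord0 ord0) / 2%:R)
          _ _ _ _ lam_spec).
- by move=> p; exact (bounded_opP ipP (B_bounded _ (Rp_B p))).
- by move=> p p' x; exact: (congr1 (fun g => g x) (B_comm _ _ (Rp_B p) (Rp_B p'))).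
- by rewrite divr_gt0 ?mulr_gt0.
move=> y; apply: le_trans (compression_coercive ipP (M := fun i j => T (tg (i, j)))
  (R_accretive k) y vLv_le0) _.
by under eq_bigr do rewrite mxE.
Qed.
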